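(* Let $(X,\overline p)$ be a perverse CS set with singular set $\Sigma$. For every point $x\in X$ there exists a path $\beta\colon[0,1]\to X$ with $\beta(0)=x$ and $\beta(]0,1])\subseteq X\setminus\Sigma$. Consequently, the map $\pi_0(X\setminus\Sigma)\to\pi_0^{\overline p}(X)$ is surjective; this map sends the component of a regular point $y$ to the component of the $0$-simplex $y$ in $\mathscr G_{\overline p}X$.
   Context: Filtered spaces. A filtered space of formal dimension $n$ is a nonempty space $X$ with closed subsets $\emptyset=X_{-1}\subseteq\cdots\subseteq X_{n-1}\subsetneq X_n=X$. Strata are the nonempty connected components of $X_i\setminus X_{i-1}$, with codimension $n-i$. The singular set is $\Sigma=X_{n-1}$; points of $X\setminus\Sigma$ are regular. CS sets. A CS set is a filtered space satisfying: - each $X_i\setminus X_{i-1}$ is an $i$-manifold; - each $x\in X_i\setminus X_{i-1}$ with $i\ne n$ has an open neighborhood $V$ and a stratified homeomorphism $\varphi\colon U\times\mathring cL\to V$ with $\varphi(u,\mathtt v)=u$ and $\varphi(U\times\mathring cL_j)=V\cap X_{i+j+1}$. Here $U$ is an open neighborhood of $x$ in $X_i\setminus X_{i-1}$, $L$ is a nonempty compact filtered space of formal dimension $n-i-1$, and $\mathring cL=L\times[0,1[/L\times0$ has apex $\mathtt v$ and filtration $\mathring cL_{i-1}$ in degree $i$. A stratified homeomorphism is a homeomorphism which, with its inverse, sends each stratum into a stratum of no larger codimension. Perversities. A perversity is a map $\overline p$ from strata to $\mathbb Z\cup\{\pm\infty\}$ vanishing on regular strata. Full simplices and the Gajer space.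 A simplex $\sigma\colon\Delta^j\to X$ is $\overline p$-allowable if $\dim\sigma^{-1}S\le j-\operatorname{codim}S+\overline p(S)$ for all singular strata $S$. Here $\dim$ is polyhedral dimension, with $\dim\emptyset=-\infty$. A simplex is $\overline p$-full if it and all its iterated faces are allowable. $\mathscr G_{\overline p}X\subseteq\mathrm{Sing}\,X$ is the simplicial set of full simplices, and $\pi_0^{\overline p}(X)=\pi_0(\mathscr G_{\overline p}X)$. Every regular point, as a $0$-simplex, is $\overline p$-full. *)

From HB Require Import structures.
From mathcomp Require Import all_boot all_order all_algebra.
From mathcomp Require Import all_classical all_reals all_analysis.
From mathcomp Require Import generic_quotient.
From Stdlib Require Import Relations.
Set Implicit Arguments. Unset Strict Implicit. Unset Printing Implicit Defensive.
Import Order.TTheory GRing.Theory Num.Theory.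
Import numFieldNormedType.Exports.
Local Open Scope classical_set_scope.
Local Open Scope ring_scope.

Definition homeo_on {A B : topologicalType} (D : set A) (E : set B)
  (f : A -> B) (g : B -> A) : Prop :=
  [/\ {within D, continuous f}, {within E, continuous g},
      (forall a, D a -> E (f a) /\ g (f a) = a) &
      (forall b, E b -> D (g b) /\ f (g b) = b)].

(* A filtration X_0 ⊆ ... ⊆ X_n is given by F : nat -> set T (only the levels
   0..n matter); Fz F extends it to integer indices with X_i = ∅ for i < 0. *)
Definition Fz {T : Type} (F : nat -> set T) (i : int) : set T :=
  match i with Posz k => F k | Negz _ => set0 end.

Definition filtered {T : topologicalType} (n : nat) (F : nat -> set T) : Prop :=
  [/\ (exists x : T, True),
      (forall i, (i <= n)%N -> closed (F i)),
      (forall i j, (i <= j)%N -> (j <= n)%N -> F i `<=` F j),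
      F n = setT &
      Fz F (n%:Z - 1) `<` F n].

Definition Fdiff {T : Type} (F : nat -> set T) (i : nat) : set T :=
  F i `\` Fz F (i%:Z - 1).

Definition stratum {T : topologicalType} (n : nat) (F : nat -> set T)
  (i : nat) (S : set T) : Prop :=
  (i <= n)%N /\ exists x, Fdiff F i x /\ S = connected_component (Fdiff F i) x.

Definition manifold (R : realType) {X : topologicalType} (i : nat) (M : set X)
  : Prop :=
  (forall x y, M x -> M y -> x <> y ->
     exists U V : set X, [/\ open U, open V, U x, V y & U `&` V = set0]) /\
  (forall x, M x -> exists (W : set X) (O : set 'rV[R]_i)
       (h : X -> 'rV[R]_i) (g : 'rV[R]_i -> X),
       [/\ open W, W x, open O & homeo_on (W `&` M) O h g]).

Section Cone.
Variables (R : realType) (L : topologicalType).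

Definition cone_dom : set (L * R)%type := [set p | 0 <= p.2 < 1].
Definition cone_base := set_type cone_dom.

Definition cone_rel : rel cone_base := fun a b =>
  (((val a).2 == 0) && ((val b).2 == 0)) || (a == b).

Lemma cone_rel_refl : ssrbool.reflexive cone_rel.
Proof. by move=> a; rewrite /cone_rel eqxx orbT. Qed.

Lemma cone_rel_sym : ssrbool.symmetric cone_rel.
Proof. by move=> a b; rewrite /cone_rel (andbC ((val b).2 == 0)) (eq_sym b). Qed.

Lemma cone_rel_trans : ssrbool.transitive cone_rel.
Proof.
move=> b a c; rewrite /cone_rel.
case/orP=> [/andP[ha hb]|/eqP->] //.
case/orP=> [/andP[_ hc]|/eqP<-]; first by rewrite ha hc.
by rewrite ha hb.
Qed.

Canonical cone_equiv := @EquivRelPack cone_base cone_rel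
  (EquivClass cone_rel_refl cone_rel_sym cone_rel_trans).

(* the open cone  L × [0,1[ / L × {0}  with the quotient topology *)
Local Open Scope quotient_scope.
Definition cone : topologicalType :=
  quotient_topology {eq_quot cone_equiv}.

Definition cone_proj (p : cone_base) : cone := \pi_cone p.

Definition cone_apex : set cone :=
  [set c | exists p : cone_base, cone_proj p = c /\ (val p).2 = 0].

(* the (open) cone on A ⊆ L, as a subset of the cone on L; cone on ∅ = apex *)
Definition coneon (A : set L) : set cone :=
  [set c | exists p : cone_base, cone_proj p = c /\
           ((val p).2 = 0 \/ A (val p).1)].
End Cone.

Definition is_CS_set (R : realType) {X : topologicalType} (n : nat)
  (F : nat -> set X) : Prop :=
  [/\ filtered n F,
      (forall i, (i <= n)%N -> manifold R i (Fdiff F i)) &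
      (forall i, (i < n)%N -> forall x, Fdiff F i x ->
        exists (U V : set X) (L : topologicalType) (LF : nat -> set L)
               (phi : (X * cone R L)%type -> X) (psi : X -> (X * cone R L)%type),
        [/\ [/\ (exists W, open W /\ U = W `&` Fdiff F i), U x & open V],
            compact [set: L] /\ filtered (n - i).-1 LF,
            homeo_on (U `*` setT) V phi psi,
            (forall u c, U u -> cone_apex c -> phi (u, c) = u) &
            (forall j : int, -1 <= j -> j <= (n%:Z - i%:Z - 1) ->
               phi @` (U `*` coneon (Fz LF j)) = V `&` Fz F (i%:Z + j + 1))])].

Definition perversity {X : topologicalType} (n : nat) (F : nat -> set X)
  (p : set X -> \bar int) : Prop :=
  forall S, stratum n F n S -> p S = 0%E.

Section Simplices.
Variable R : realType.

Definition stdsimplex (j : nat) : set 'rV[R]_(j.+1) :=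
  [set t | (forall k, 0 <= t 0 k) /\ \sum_k t 0 k = 1].

Definition conv (j : nat) (t : seq 'rV[R]_(j.+1)) : set 'rV[R]_(j.+1) :=
  [set y | exists lam : nat -> R, [/\ (forall k, 0 <= lam k),
     \sum_(k < size t) lam k = 1 & y = \sum_(k < size t) lam k *: t`_k]].

(* polyhedral dimension: dim A <= m iff A is contained in a compact polyhedron
   of dimension <= m, i.e. a finite union of (linear) simplices each spanned by
   at most m+1 points; dim ∅ = -oo *)
Definition poly_dim_le (j : nat) (A : set 'rV[R]_(j.+1)) (m : \bar int) : Prop :=
  exists s : seq (seq 'rV[R]_(j.+1)),
    (forall t, t \in s -> (((size t)%:Z - 1)%:E <= m)%E) /\
    A `<=` [set y | exists2 t, t \in s & conv t y].

(* the linear map Δ^m -> Δ^j sending vertex l to vertex f l *)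
Definition facemap (m j : nat) (f : 'I_(m.+1) -> 'I_(j.+1))
  (t : 'rV[R]_(m.+1)) : 'rV[R]_(j.+1) :=
  \row_k \sum_(l | f l == k) t 0 l.

Context {X : topologicalType} (n : nat) (F : nat -> set X)
  (p : set X -> \bar int).

Definition allowable (j : nat) (sigma : 'rV[R]_(j.+1) -> X) : Prop :=
  forall i S, (i < n)%N -> stratum n F i S ->
    poly_dim_le (@stdsimplex j `&` sigma @^-1` S)
                (((j%:Z - (n%:Z - i%:Z))%:E + p S)%E).

(* full simplex: a singular simplex all of whose iterated faces
   (including itself) are allowable *)
Definition full (j : nat) (sigma : 'rV[R]_(j.+1) -> X) : Prop :=
  {within @stdsimplex j, continuous sigma} /\
  forall (m : nat) (f : 'I_(m.+1) -> 'I_(j.+1)),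
    (forall a b : 'I_(m.+1), (a < b)%N -> (f a < f b)%N) ->
    allowable (sigma \o facemap f).

Definition pt_simplex (x : X) : 'rV[R]_1 -> X := fun _ => x.

(* 1-simplices of the Gajer space joining x to y *)
Definition gedge (x y : X) : Prop :=
  exists sigma : 'rV[R]_2 -> X,
    [/\ full sigma, sigma (delta_mx 0 0) = x & sigma (delta_mx 0 1) = y].

Definition gclass (x : X) : set X := [set y | clos_refl_sym_trans X gedge x y].

(* π_0^p(X): the components of G_p X, each represented by its set of vertices *)
Definition pi0_gajer : set (set X) :=
  [set C | exists x, full (pt_simplex x) /\ C = gclass x].

(* the map π_0(X \ Σ) -> π_0^p(X), on representatives: y ↦ component of y *)
Definition pi0_map (y : X) : set X := gclass y.
End Simplices.

(* Near a point x of a singular stratum a conical chart identifies a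
   neighbourhood of x with U x c(L), the singular part corresponding to
   U x c(L_(k-1)); following the ray of the cone through a regular point of
   the link L, a path leaves the singular set at once.  If the 0-simplex x is
   full, every singular stratum S through x has p(S) >= codim S; the 1-simplex
   running along such a path meets no other singular stratum, so it and its
   faces are allowable, and it joins x to a regular point in the Gajer space. *)

From Pilot Require Import Defs.
From HB Require Import structures.
From mathcomp Require Import all_boot all_order all_algebra.
From mathcomp Require Import all_classical all_reals all_analysis.
From mathcomp Require Import generic_quotient zify.
From Stdlib Require Import Relations.
Import Order.TTheory GRing.Theory Num.Theory.
Import numFieldNormedType.Exports.
Local Open Scope classical_set_scope.
Local Open Scope ring_scope.

Lemma continuous_comp_within {U V W : topologicalType} (B : set U)
    (f : U -> W) (g : V -> U) :
  (forall v, B (g v)) -> continuous g -> {within B, continuous f} ->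
  continuous (f \o g).
Proof.
move=> gB cg /subspace_sigL_continuousP cf.
pose g' : V -> set_type B := fun v => exist _ (g v) (mem_set (gB v)).
have cg' : continuous g' by apply: (@continuous_comp_initial _ _ _ set_val g').
have -> : f \o g = sigL B f \o g' by [].
by move=> v; apply: continuous_comp; [exact: cg'|exact: cf].
Qed.

Lemma clos_rst_class_eq {T : Type} (r : relation T) (x y : T) : r x y ->
  [set z | clos_refl_sym_trans T r y z] = [set z | clos_refl_sym_trans T r x z].
Proof.
move=> rxy; apply/seteqP; split=> z /= h.
  exact: rst_trans (rst_step _ _ _ _ rxy) h.
exact: rst_trans (rst_sym _ _ _ _ (rst_step _ _ _ _ rxy)) h.
Qed.

Section Clip.
Context {R : realType}.
Implicit Types a b t : R.

Definition clip a b t : R := Num.min (Num.max t a) b.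

Lemma clip_continuous a b : continuous (clip a b).
Proof.
move=> t; apply: (@continuous_min R R (fun t => Num.max t a) (fun=> b)).
  by apply: (@continuous_max R R id (fun=> a)); [exact: cvg_id|exact: cvg_cst].
exact: cvg_cst.
Qed.

Lemma clip_itv a b t : a <= b -> a <= clip a b t <= b.
Proof.
by move=> aLb; rewrite /clip le_min le_max lexx aLb orbT ge_min lexx orbT.
Qed.

Lemma clip_id a b t : a <= t <= b -> clip a b t = t.
Proof. by case/andP=> aLt tLb; rewrite /clip (max_idPl aLt) (min_idPl tLb). Qed.

Lemma clip_gt a b t : a < b -> a < t -> a < clip a b t.
Proof. by move=> aLb aLt; rewrite /clip lt_min lt_max aLt aLb. Qed.

End Clip.

Lemma homeo_on_image_mem {A B : topologicalType} {D : set A} {E : set B}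
    {f : A -> B} {g : B -> A} {S : set A} {a : A} :
  homeo_on D E f g -> S `<=` D -> D a -> (f @` S) (f a) -> S a.
Proof.
case=> _ _ gf _ SD Da [b Sb fba].
have [_ <-] := gf a Da; rewrite -fba.
by have [_ ->] := gf b (SD b Sb).
Qed.

Section Filtration.
Context {T : Type} (F : nat -> set T).

Lemma Fz_succ (k : nat) : Fz F (k.+1%:Z - 1) = F k.
Proof. by rewrite (_ : k.+1%:Z - 1 = k%:Z) //; lia. Qed.

Lemma exists_Fdiff {k : nat} {x : T} :
  F k x -> exists2 i, (i <= k)%N & Fdiff F i x.
Proof.
elim: k => [|k IH] Fkx; first by exists 0%N => //; split.
have [/IH [i ik Fix]|nFkx] := pselect (F k x).
  by exists i => //; exact: leqW.
by exists k.+1 => //; split => //; rewrite Fz_succ.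
Qed.

End Filtration.

Section FilteredSpace.
Context {X : topologicalType} {n : nat} {F : nat -> set X}.
Hypothesis filtF : filtered n F.

Lemma filtered_regular_point : exists x, ~ Fz F (n%:Z - 1) x.
Proof.
case: filtF => _ _ _ -> [_ not_full].
apply: contrapT => /forallNP allsing; apply: not_full => x _.
exact: contrapT (allsing x).
Qed.

Lemma stratum_singular {i : nat} {S : set X} :
  (i < n)%N -> stratum n F i S -> S `<=` Fz F (n%:Z - 1).
Proof.
move=> ltin [_ [x [_ ->]]] z /connected_component_sub [Fiz _].
case: filtF => _ _ mono _ _; case: n ltin mono => // m ltim mono.
by rewrite Fz_succ; exact: (mono i m).
Qed.

End FilteredSpace.

Section ConeRay.
Variables (R : realType) (L : topologicalType).

(* Clipping to [0, 1/2] keeps the ray inside the open cone for every t. *)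
Let ray_height (t : R) : R := clip 0 2^-1 t.

Let ray_height_dom (l : L) (t : R) : @cone_dom R L (l, ray_height t).
Proof.
have /andP[h0 h2] : 0 <= ray_height t <= 2^-1.
  by apply: clip_itv; rewrite invr_ge0 ler0n.
by rewrite /cone_dom /= h0 (le_lt_trans h2) // invf_lt1 // ltr1n.
Qed.

Let ray_point (l : L) (t : R) : cone_base R L :=
  exist _ (l, ray_height t) (mem_set (ray_height_dom l t)).

Definition cone_ray (l : L) (t : R) : cone R L := cone_proj (ray_point l t).

Lemma cone_ray_continuous (l : L) : continuous (cone_ray l).
Proof.
have cpt : continuous (ray_point l).
  apply: (@continuous_comp_initial _ _ _ set_val (ray_point l)) => t /=.
  exact: (cvg_pair (cvg_cst l) (@clip_continuous R 0 2^-1 t)).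
by move=> t; apply: continuous_comp; [exact: cpt|exact: pi_continuous].
Qed.

Lemma cone_ray_apex (l : L) : cone_apex (cone_ray l 0).
Proof.
exists (ray_point l 0); split=> //=.
by rewrite /ray_height clip_id // lexx invr_ge0 ler0n.
Qed.

Lemma cone_ray_coneon (A : set L) (l : L) (t : R) :
  0 < t -> coneon A (cone_ray l t) -> A l.
Proof.
move=> t0.
have /negbTE h0 : ray_height t != 0.
  by rewrite gt_eqF // clip_gt // invr_gt0 ltr0n.
move=> [q [/eqmodP]] /=; rewrite /cone_rel h0 andbF /=.
by move=> /eqP -> [/eqP|//]; rewrite h0.
Qed.

End ConeRay.

Lemma CS_set_regular_path {R : realType} {X : topologicalType} {n : nat}
    {F : nat -> set X} :
  is_CS_set R n F -> forall x : X, exists beta : R -> X,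
    [/\ continuous beta, beta 0 = x &
        forall t, 0 < t -> ~ Fz F (n%:Z - 1) (beta t)].
Proof.
case=> [filtF _ chart] x; have [_ _ _ FnT _] := filtF.
have Fnx : F n x by rewrite FnT.
have [i] := exists_Fdiff F Fnx.
rewrite leq_eqVlt => /orP[/eqP -> [_ regx]|ltin Fix].
  by exists (fun=> x); split => //; exact: cst_continuous.
have [U [V [L [LF [phi [psi [[_ Ux _] [_ filtLF] hphi apex img]]]]]]] :=
  chart i ltin x Fix.
have [l regl] := filtered_regular_point filtLF.
pose ray t := (x, cone_ray R L l t).
have Uray t : (U `*` setT) (ray t) by [].
exists (phi \o ray); split.
- apply: (@continuous_comp_within _ _ _ _ phi _ Uray) => [t|]; last by case: hphi.
  exact: (cvg_pair (cvg_cst x) (cone_ray_continuous R L l t)).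
- exact: apex Ux (cone_ray_apex R L l).
- move=> t t0 sing; apply: regl.
  (* [phi] maps [U `*` coneon L_(k-1)] onto the singular part of [V]. *)
  set k := (n - i).-1.
  have [kn k0] : (k%:Z - 1 <= n%:Z - i%:Z - 1) /\ (-1 <= k%:Z - 1) by lia.
  have ink : i%:Z + (k%:Z - 1) + 1 = n%:Z - 1 by lia.
  have ray_img : (phi @` (U `*` coneon (Fz LF (k%:Z - 1)))) (phi (ray t)).
    rewrite img // ink; split=> //.
    by case: hphi => _ _ /(_ _ (Uray t)) [].
  have sub_dom : U `*` @coneon R L (Fz LF (k%:Z - 1)) `<=` U `*` setT.
    by move=> c [Uc _].
  have [_ /=] := homeo_on_image_mem hphi sub_dom (Uray t) ray_img.
  exact: cone_ray_coneon.
Qed.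

Lemma lee_int_shift (j c : int) (e : \bar int) :
  (j%:E <= (j - c)%:E + e)%E = (c%:E <= e)%E.
Proof.
case: e => [r||] //=; last by rewrite addey // !leey.
by rewrite -EFinD !lee_fin; apply/idP/idP; lia.
Qed.

Section PolyhedralDimension.
Variables (R : realType) (j : nat).
Implicit Types (A B : set 'rV[R]_j.+1) (m : \bar int).

Lemma conv_nil : @Defs.conv R j [::] = set0.
Proof.
apply/seteqP; split=> // y [lam [_ + _]].
by rewrite big_ord0 => /esym/eqP; rewrite oner_eq0.
Qed.

Lemma poly_dim_leW A B m m' :
  A `<=` B -> (m <= m')%E -> poly_dim_le B m -> poly_dim_le A m'.
Proof.
move=> AB mm' [s [sz cov]]; exists s; split; last exact: subset_trans cov.
by move=> t /sz /le_trans; apply.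
Qed.

Lemma poly_dim_le_ge0 A m : A !=set0 -> poly_dim_le A m -> (0 <= m)%E.
Proof.
move=> [a Aa] [s [sz cov]]; have [t ts cta] := cov a Aa.
apply: le_trans (sz t ts).
case: t {ts} cta => [|v t] /=; first by rewrite conv_nil.
by rewrite lee_fin; lia.
Qed.

Lemma poly_dim_le_stdsimplex : poly_dim_le (@stdsimplex R j) j%:Z%:E.
Proof.
pose vs := [seq delta_mx 0 k : 'rV[R]_j.+1 | k <- enum 'I_j.+1].
have size_vs : size vs = j.+1 by rewrite size_map size_enum_ord.
exists [:: vs]; split=> [_ /[!inE] /eqP -> | t [t_ge0 t_sum]].
  by rewrite size_vs lee_fin; lia.
exists vs; first by rewrite inE.
exists (fun k => t 0 (inord k)); split=> //.
  by rewrite size_vs -t_sum; apply: eq_bigr => k _; rewrite inord_val.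
rewrite [LHS]row_sum_delta size_vs; apply: eq_bigr => k _.
by rewrite inord_val (nth_map ord0) ?size_enum_ord // nth_ord_enum.
Qed.

End PolyhedralDimension.

Section PathSimplex.
Context {R : realType} {X : topologicalType} (n : nat) (F : nat -> set X)
  (p : set X -> \bar int).

Lemma allowable_of_codim (j : nat) (sigma : 'rV[R]_j.+1 -> X) :
  (forall i S t, (i < n)%N -> stratum n F i S -> stdsimplex t -> S (sigma t) ->
     ((n%:Z - i%:Z)%:E <= p S)%E) ->
  allowable n F p sigma.
Proof.
move=> codim i S ltin strS.
have [[t [simt St]]|none] := pselect (exists t, stdsimplex t /\ S (sigma t)).
  apply: poly_dim_leW (poly_dim_le_stdsimplex R j); first by move=> ? [].
  by rewrite lee_int_shift; exact: codim St.
by exists [::]; split=> // t [simt St]; exfalso; apply: none; exists t.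
Qed.

Lemma full_pt_simplex_codim (x : X) (i : nat) (S : set X) :
  full n F p (@pt_simplex R X x) -> (i < n)%N -> stratum n F i S -> S x ->
  ((n%:Z - i%:Z)%:E <= p S)%E.
Proof.
move=> [_ allow] ltin strS Sx.
have id_incr (a b : 'I_1) : (a < b)%N -> (a < b)%N by [].
rewrite -(lee_int_shift 0).
apply: poly_dim_le_ge0 (allow 0%N id id_incr i S ltin strS).
exists (const_mx 1); split=> //; split; first by move=> k; rewrite mxE ler01.
by rewrite big_ord1 mxE.
Qed.

(* [t 0 1] is the barycentric coordinate of the second vertex; it is clipped
   to [0, 1], where [beta] is known to be continuous. *)
Definition path_simplex (beta : R -> X) (t : 'rV[R]_2) : X :=
  beta (clip 0 1 (t 0 1)).

Lemma path_simplex_full (beta : R -> X) :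
  filtered n F -> {within [set t : R | 0 <= t <= 1], continuous beta} ->
  (forall t, 0 < t <= 1 -> ~ Fz F (n%:Z - 1) (beta t)) ->
  full n F p (@pt_simplex R X (beta 0)) -> full n F p (path_simplex beta).
Proof.
move=> filtF cbeta reg full0; split.
  pose height (t : 'rV[R]_2) := clip 0 1 (t 0 1).
  have height01 t : 0 <= height t <= 1 by apply: clip_itv; exact: ler01.
  apply/continuous_subspaceT.
  apply: (@continuous_comp_within _ _ _ _ beta height height01 _ cbeta) => t.
  rewrite /height; apply: continuous_comp; first exact: coord_continuous.
  exact: clip_continuous.
move=> m f _; apply: allowable_of_codim => i S t ltin strS _ /=.
rewrite /path_simplex; set v := clip 0 1 _.
have [-> | v0] := eqVneq v 0 => Sv.
  exact: full_pt_simplex_codim full0 ltin strS Sv.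
case: (reg v); last by apply: (stratum_singular filtF ltin strS).
by rewrite lt0r v0 clip_itv // ler01.
Qed.

Lemma gedge_path_simplex (beta : R -> X) :
  filtered n F -> {within [set t : R | 0 <= t <= 1], continuous beta} ->
  (forall t, 0 < t <= 1 -> ~ Fz F (n%:Z - 1) (beta t)) ->
  full n F p (@pt_simplex R X (beta 0)) -> gedge R n F p (beta 0) (beta 1).
Proof.
move=> filtF cbeta reg full0; exists (path_simplex beta).
split; first exact: path_simplex_full;
  by rewrite /path_simplex mxE /= clip_id // lexx ler01.
Qed.

End PathSimplex.

Theorem mainTheorem16 (R : realType) (X : topologicalType) (n : nat)
  (F : nat -> set X) (p : set X -> \bar int) :
  is_CS_set R n F -> perversity n F p ->
  (forall x : X, exists beta : R -> X,
     [/\ {within [set t : R | 0 <= t <= 1], continuous beta},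
         beta 0 = x &
         forall t : R, 0 < t <= 1 -> ~ Fz F (n%:Z - 1) (beta t)]) /\
  (forall C, pi0_gajer R n F p C ->
     exists y : X, ~ Fz F (n%:Z - 1) y /\ pi0_map R n F p y = C).
Proof.
move=> CS _; have filtF : filtered n F by case: CS.
split=> [x | _ [x [fullx ->]]].
  have [beta [cbeta beta0 reg]] := CS_set_regular_path CS x.
  exists beta; split=> // [|t /andP[t0 _]]; last exact: reg.
  exact: continuous_subspaceT.
have [beta [cbeta beta0 reg]] := CS_set_regular_path CS x.
exists (beta 1); split; first exact/reg/ltr01.
apply: clos_rst_class_eq; rewrite -beta0.
apply: gedge_path_simplex => // [|t /andP[t0 _]|]; last by rewrite beta0.
  exact: continuous_subspaceT.
exact: reg.
Qed.
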